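(* Let $(S,\mathcal C)$ be a connectoid and $T$ a normal tree of $(S,\mathcal C)$. For every end $\omega$ of the tree $T$, let $R_\omega$ be the unique ray in $\omega$ starting at the root of $T$. Then $V(R_\omega)$ converges to an end $\eta(\omega)\in\Omega(S,\mathcal C)$, and the map $\omega\mapsto\eta(\omega)$ is a bijection between the ends of $T$ and the ends of $(S,\mathcal C)$ lying in the closure of $V(T)$.
   Context: A connectoid is given by a set $S$ and a set $\mathcal F$ of finite subsets of $S$ such that (i) $F\cup F'\in\mathcal F$ whenever $F,F'\in\mathcal F$ and $F\cap F'\neq\emptyset$, and (ii) $\emptyset\in\mathcal F$ and $\{s\}\in\mathcal F$ for every $s\in S$. A set $C\subseteq S$ is connected if for all $x,y\in C$ there is $F\in\mathcal F$ with $F\subseteq C$ and $x,y\in F$; $\mathcal C$ is the set of connected sets. For $S'\subseteq S$, a component of $S'$ is a maximal connected subset, and $\mathcal K(S')$ is the set of components of $S'$. ''Almost all'' means all but finitely many. A necklace is a connected set $N$ for which there is a family $(H_n)_{n\in\mathbb N}$ of finite connected sets with $N=\bigcup_n H_n$ and $H_i\cap H_j\neq\emptyset$ iff $|i-j|\le 1$. For finite $X\subseteq S$, the $X$-tail of $N$ is the unique element of $\mathcal K(N\setminus X)$ containing almost all elements of $N$. Two necklaces are equivalent if for every finite $X\subseteq S$ their $X$-tails lie in the same element of $\mathcal K(S\setminus X)$. An end is an equivalence class of necklaces; $\Omega(S,\mathcal C)$ is the set of ends; $K(X,\omega)$ is the element of $\mathcal K(S\setminus X)$ containing the $X$-tails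 of the necklaces in $\omega$. An infinite set $Y\subseteq S$ converges to an end $\nu$ if $K(X,\nu)$ contains almost all elements of $Y$ for every finite $X\subseteq S$. An end $\nu$ lies in the closure of a set $U\subseteq S$ if $K(X,\nu)\cap U\neq\emptyset$ for every finite $X\subseteq S$. For a rooted tree $T$ with tree order $\le_T$ and $t\in V(T)$, let $\mathrm{Down}^\circ_T(t)=\{x\in V(T):x<_T t\}$. A weak normal tree of $(S,\mathcal C)$ is a rooted undirected tree $T$ with $V(T)\subseteq S$ such that (1) for every $C\in\mathcal C$ and every two $\le_T$-incomparable $u,v\in C\cap V(T)$ there is $w\in C$ with $w\le_T u$ and $w\le_T v$, and (2) for all $u\le_T v$ in $V(T)$ there is $C\in\mathcal C$ containing $u,v$ with $C\cap\mathrm{Down}^\circ_T(u)=\emptyset$. It is a normal tree if additionally for every rooted ray $R$ of $T$ some necklace contains almost all vertices of $R$. Ends of $T$ are its graph-theoretic ends (equivalence classes of rays). *)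

From Stdlib Require Import List Classical.
Import ListNotations.

Definition subset {V : Type} (A B : V -> Prop) : Prop := forall x, A x -> B x.
Definition finite_set {V : Type} (A : V -> Prop) : Prop :=
  exists l : list V, forall x, A x -> In x l.
Definition setminus {V : Type} (A B : V -> Prop) : V -> Prop := fun x => A x /\ ~ B x.

Record connectoid {V : Type} (F : (V -> Prop) -> Prop) : Prop := {
  cn_fin : forall A, F A -> finite_set A;
  cn_union : forall A B, F A -> F B -> (exists x, A x /\ B x) ->
             F (fun x => A x \/ B x);
  cn_empty : F (fun _ => False);
  cn_single : forall s, F (fun x => x = s) }.

(* C is connected (C belongs to the set \mathcal C) *)
Definition connected {V : Type} (F : (V -> Prop) -> Prop) (C : V -> Prop) : Prop :=
  forall x y, C x -> C y -> exists A, F A /\ subset A C /\ A x /\ A y.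

Definition component {V : Type} (F : (V -> Prop) -> Prop) (S' K : V -> Prop) : Prop :=
  subset K S' /\ connected F K /\
  forall K', subset K' S' -> connected F K' -> subset K K' -> subset K' K.

Definition necklace {V : Type} (F : (V -> Prop) -> Prop) (N : V -> Prop) : Prop :=
  connected F N /\
  exists H : nat -> V -> Prop,
    (forall n, finite_set (H n) /\ connected F (H n)) /\
    (forall x, N x <-> exists n, H n x) /\
    (forall i j, (exists x, H i x /\ H j x) <-> (i <= S j /\ j <= S i)).

Definition tail {V : Type} (F : (V -> Prop) -> Prop) (N X K : V -> Prop) : Prop :=
  component F (setminus N X) K /\ finite_set (setminus N K).

Definition necklace_equiv {V : Type} (F : (V -> Prop) -> Prop) (N N' : V -> Prop) : Prop :=
  forall X, finite_set X -> forall K K', tail F N X K -> tail F N' X K' ->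
    exists D, component F (fun x => ~ X x) D /\ subset K D /\ subset K' D.

Definition cend {V : Type} (F : (V -> Prop) -> Prop) : Type :=
  { E : (V -> Prop) -> Prop |
    exists N, necklace F N /\
      forall N', E N' <-> (necklace F N' /\ necklace_equiv F N N') }.

Definition KX {V : Type} (F : (V -> Prop) -> Prop) (X : V -> Prop) (om : cend F)
  (D : V -> Prop) : Prop :=
  component F (fun x => ~ X x) D /\
  forall N, proj1_sig om N -> forall K, tail F N X K -> subset K D.

Definition converges {V : Type} (F : (V -> Prop) -> Prop) (Y : V -> Prop) (om : cend F) : Prop :=
  ~ finite_set Y /\
  forall X, finite_set X -> exists D, KX F X om D /\ finite_set (setminus Y D).

Definition in_closure {V : Type} (F : (V -> Prop) -> Prop) (U : V -> Prop) (om : cend F) : Prop :=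
  forall X, finite_set X -> exists D, KX F X om D /\ exists u, D u /\ U u.

Fixpoint chain {V : Type} (adj : V -> V -> Prop) (l : list V) : Prop :=
  match l with
  | x :: t => match t with
              | y :: _ => adj x y /\ chain adj t
              | nil => True
              end
  | nil => True
  end.

Definition tpath {V : Type} (adj : V -> V -> Prop) (x y : V) (p : list V) : Prop :=
  hd_error p = Some x /\ last p x = y /\ NoDup p /\ chain adj p.

Definition is_cycle {V : Type} (adj : V -> V -> Prop) (c : list V) : Prop :=
  3 <= length c /\ NoDup c /\ chain adj c /\
  exists x, hd_error c = Some x /\ adj (last c x) x.

Record rooted_tree {V : Type} (VT : V -> Prop) (adj : V -> V -> Prop) (root : V) : Prop := {
  rt_sym : forall x y, adj x y -> adj y x;
  rt_irrefl : forall x, ~ adj x x;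
  rt_dom : forall x y, adj x y -> VT x /\ VT y;
  rt_root : VT root;
  rt_conn : forall v, VT v -> exists p, tpath adj root v p;
  rt_acyc : forall c, ~ is_cycle adj c }.

Definition tle {V : Type} (adj : V -> V -> Prop) (root x y : V) : Prop :=
  exists p, tpath adj root y p /\ In x p.

Definition down_open {V : Type} (VT : V -> Prop) (adj : V -> V -> Prop) (root u : V) : V -> Prop :=
  fun x => VT x /\ tle adj root x u /\ x <> u.

Definition ray {V : Type} (adj : V -> V -> Prop) (R : nat -> V) : Prop :=
  (forall n m, R n = R m -> n = m) /\ forall n, adj (R n) (R (S n)).

Definition ray_set {V : Type} (R : nat -> V) : V -> Prop := fun x => exists n, R n = x.

Definition ray_equiv {V : Type} (adj : V -> V -> Prop) (R R' : nat -> V) : Prop :=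
  forall X : V -> Prop, finite_set X ->
    exists n m p, (forall k, n <= k -> ~ X (R k)) /\ (forall k, m <= k -> ~ X (R' k)) /\
      tpath adj (R n) (R' m) p /\ (forall z, In z p -> ~ X z).

Definition tend {V : Type} (adj : V -> V -> Prop) : Type :=
  { E : (nat -> V) -> Prop |
    exists R, ray adj R /\ forall R', E R' <-> (ray adj R' /\ ray_equiv adj R R') }.

Definition weak_normal_tree {V : Type} (F : (V -> Prop) -> Prop) (VT : V -> Prop)
  (adj : V -> V -> Prop) (root : V) : Prop :=
  rooted_tree VT adj root /\
  (forall C u v, connected F C -> C u -> C v -> VT u -> VT v ->
     ~ tle adj root u v -> ~ tle adj root v u ->
     exists w, C w /\ tle adj root w u /\ tle adj root w v) /\
  (forall u v, VT u -> VT v -> tle adj root u v ->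
     exists C, connected F C /\ C u /\ C v /\
       forall x, C x -> ~ down_open VT adj root u x).

Definition normal_tree {V : Type} (F : (V -> Prop) -> Prop) (VT : V -> Prop)
  (adj : V -> V -> Prop) (root : V) : Prop :=
  weak_normal_tree F VT adj root /\
  forall R, ray adj R -> R 0 = root ->
    exists N, necklace F N /\ finite_set (setminus (ray_set R) N).

From Pilot Require Import Defs.
From Stdlib Require Import List Classical Lia Arith.
From Stdlib Require Import ClassicalEpsilon FunctionalExtensionality PropExtensionality ProofIrrelevance.
Import ListNotations.

(* A ray of T eventually only climbs away from the root, and from then on its root paths grow
   by one vertex at a time; reading them off gives a rooted ray with the same tail.  Two rooted
   rays with equivalent tails coincide, since a vertex of one that is not on the other separates
   their tails in T.  So every end of T contains exactly one rooted ray R, and by normality R lies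
   almost entirely in a necklace, whose end is the limit of V(R).

   Injectivity: if two rooted rays part after t, late vertices of both lie in one component of
   S minus the ancestors of t; condition (1) of weak normality gives a common lower bound of them
   in that component, i.e. a common vertex of the two rays, which must lie at or below t.
   Surjectivity: for an end nu in the closure of V(T), climb from the root, always into the child
   above which lie the tree vertices of K(ancestors v, nu); condition (1) keeps these inside a
   single subtree, and the resulting rooted ray meets every K(X, nu) infinitely often. *)

Section FiniteSets.
Context {V : Type}.

Lemma finite_subset (A B : V -> Prop) : finite_set B -> subset A B -> finite_set A.
Proof. intros [l Hl] H. exists l. auto. Qed.

Lemma finite_union (A B : V -> Prop) :
  finite_set A -> finite_set B -> finite_set (fun x => A x \/ B x).
Proof. intros [l1 H1] [l2 H2]. exists (l1 ++ l2). intros x [Hx|Hx]; apply in_or_app; auto. Qed.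

Lemma finite_union_lt (H : nat -> V -> Prop) : (forall n, finite_set (H n)) ->
  forall n0, finite_set (fun x => exists n, n < n0 /\ H n x).
Proof.
  intros HH n0. induction n0 as [|n0 IH].
  - exists []. intros x [n [Hn _]]. lia.
  - apply finite_subset with (B := fun x => (exists n, n < n0 /\ H n x) \/ H n0 x).
    + apply finite_union; auto.
    + intros x [n [Hn Hx]]. destruct (Nat.eq_dec n n0) as [->|Hne]; auto.
      left. exists n. split; auto. lia.
Qed.

Lemma injective_eventually_avoids (f : nat -> V) (Y : V -> Prop) :
  (forall n m, f n = f m -> n = m) -> finite_set Y ->
  exists n0, forall k, n0 <= k -> ~ Y (f k).
Proof.
  intros Hinj [l Hl].
  enough (exists n0, forall k, n0 <= k -> ~ In (f k) l) as [n0 Hn0]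
    by (exists n0; intros k Hk Hy; apply (Hn0 k Hk); auto).
  clear Hl. induction l as [|a l [n0 Hn0]].
  - exists 0. intros k _ [].
  - destruct (classic (exists i, f i = a)) as [[i Hi]|Hno].
    + exists (max n0 (S i)). intros k Hk [E|E].
      * rewrite <- Hi in E. apply Hinj in E. lia.
      * apply (Hn0 k); auto. lia.
    + exists n0. intros k Hk [E|E]; [apply Hno; eauto|apply (Hn0 k); auto].
Qed.

Lemma injective_range_infinite (f : nat -> V) : (forall n m, f n = f m -> n = m) ->
  ~ finite_set (ray_set f).
Proof.
  intros Hinj Hf. destruct (injective_eventually_avoids f _ Hinj Hf) as [n0 Hn0].
  apply (Hn0 n0); [lia|]. exists n0. reflexivity.
Qed.

Lemma cofinite_in_infinite_meet (Y A B : V -> Prop) : ~ finite_set Y ->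
  finite_set (setminus Y A) -> finite_set (setminus Y B) -> exists x, A x /\ B x.
Proof.
  intros Hinf HA HB. apply NNPP. intros Hno. apply Hinf.
  apply finite_subset with (B := fun x => setminus Y A x \/ setminus Y B x).
  - apply finite_union; auto.
  - intros y Yy. destruct (classic (A y)).
    + right. split; auto. intros By. apply Hno. eauto.
    + left. split; auto.
Qed.

End FiniteSets.

Section Connectoid.
Context {V : Type} {F : (V -> Prop) -> Prop} (HF : connectoid F).

Lemma connected_union (A B : V -> Prop) : connected F A -> connected F B ->
  (exists z, A z /\ B z) -> connected F (fun x => A x \/ B x).
Proof.
  intros HA HB [z [Az Bz]] x y Hx Hy.
  assert (Hz : forall w, A w \/ B w ->
            exists C, F C /\ subset C (fun x => A x \/ B x) /\ C w /\ C z).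
  { intros w [Aw|Bw].
    - destruct (HA w z Aw Az) as [C [FC [SC [Cw Cz]]]].
      exists C. repeat split; auto. intros u Hu. left; auto.
    - destruct (HB w z Bw Bz) as [C [FC [SC [Cw Cz]]]].
      exists C. repeat split; auto. intros u Hu. right; auto. }
  destruct (Hz x Hx) as [C1 [F1 [S1 [C1x C1z]]]].
  destruct (Hz y Hy) as [C2 [F2 [S2 [C2y C2z]]]].
  exists (fun u => C1 u \/ C2 u). repeat split; auto.
  - apply (cn_union F HF); eauto.
  - intros u [Hu|Hu]; auto.
Qed.

Lemma component_sub (S' D : V -> Prop) : component F S' D -> subset D S'.
Proof. intros [H _]. exact H. Qed.

Lemma component_connected (S' D : V -> Prop) : component F S' D -> connected F D.
Proof. intros [_ [H _]]. exact H. Qed.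

Lemma component_absorbs (S' D K : V -> Prop) : component F S' D -> connected F K ->
  subset K S' -> (exists x, K x /\ D x) -> subset K D.
Proof.
  intros [HDS [HDc HDmax]] HK HKS [x [Kx Dx]] y Ky.
  apply (HDmax (fun y => D y \/ K y)); auto.
  - intros u [Hu|Hu]; auto.
  - apply connected_union; eauto.
  - intros u Hu; auto.
Qed.

Lemma components_meet_sub (S' D D' : V -> Prop) : component F S' D -> component F S' D' ->
  (exists x, D x /\ D' x) -> subset D' D.
Proof.
  intros HD HD' [x [Dx D'x]]. eapply component_absorbs; eauto.
  - eapply component_connected; eauto.
  - eapply component_sub; eauto.
Qed.

(* The component of [a] is the union of all connected subsets of [S'] containing [a]. *)
Lemma component_exists (S' K : V -> Prop) (a : V) : connected F K -> subset K S' -> K a ->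
  exists D, component F S' D /\ subset K D.
Proof.
  intros HK HKS Ka.
  exists (fun x => exists B, connected F B /\ subset B S' /\ B a /\ B x).
  split; [split; [|split]|].
  - intros x [B [_ [HB [_ Bx]]]]. auto.
  - intros x y [Bx [HBx [SBx [Bxa Bxx]]]] [By [HBy [SBy [Bya Byy]]]].
    destruct (connected_union Bx By HBx HBy (ex_intro _ a (conj Bxa Bya))
                x y (or_introl Bxx) (or_intror Byy)) as [C [FC [SC [Cx Cy]]]].
    exists C. repeat split; auto.
    intros u Cu. destruct (SC u Cu) as [Hu|Hu]; [exists Bx|exists By]; auto.
  - intros K' HK'S HK'c Hsub x Hx. exists K'. repeat split; auto.
    apply Hsub. exists K. auto.
  - intros x Kx. exists K. auto.
Qed.

Lemma beads_connected (H : nat -> V -> Prop) :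
  (forall n, connected F (H n)) -> (forall i, exists x, H i x /\ H (S i) x) ->
  forall d a x y, H a x -> H (a + d) y ->
  exists C, F C /\ subset C (fun z => exists n, a <= n /\ H n z) /\ C x /\ C y.
Proof.
  intros Hc Hi d. induction d as [|d IH]; intros a x y Hx Hy.
  - rewrite Nat.add_0_r in Hy. destruct (Hc a x y Hx Hy) as [C [FC [SC [Cx Cy]]]].
    exists C. repeat split; auto. intros u Cu. exists a. split; auto.
  - destruct (Hi (a + d)) as [z [Hz1 Hz2]].
    destruct (IH a x z Hx Hz1) as [C1 [F1 [S1 [C1x C1z]]]].
    rewrite Nat.add_succ_r in Hy.
    destruct (Hc (S (a + d)) z y Hz2 Hy) as [C2 [F2 [S2 [C2z C2y]]]].
    exists (fun u => C1 u \/ C2 u). repeat split; auto.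
    + apply (cn_union F HF); eauto.
    + intros u [Hu|Hu]; auto. exists (S (a + d)). split; auto. lia.
Qed.

Section Beads.
Variable H : nat -> V -> Prop.
Hypothesis Hmeet : forall i j, (exists x, H i x /\ H j x) <-> (i <= S j /\ j <= S i).

Lemma bead_nonempty n : exists x, H n x.
Proof. destruct (proj2 (Hmeet n n)) as [x [Hx _]]; [lia|]. eauto. Qed.

Lemma beads_eventually_avoid (l : list V) :
  exists n0, forall n, n0 <= n -> forall x, H n x -> ~ In x l.
Proof.
  induction l as [|a l [n0 Hn0]].
  - exists 0. intros n _ x _ [].
  - destruct (classic (exists i, H i a)) as [[i Hi]|Hno].
    + exists (max n0 (S (S i))). intros n Hn x Hx [<-|E].
      * destruct (proj1 (Hmeet i n)) as [_ Hle]; [eauto|]. lia.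
      * apply (Hn0 n) with x; auto. lia.
    + exists n0. intros n Hn x Hx [<-|E]; [eauto|eapply Hn0; eauto].
Qed.

End Beads.

Lemma necklace_infinite (N : V -> Prop) : necklace F N -> ~ finite_set N.
Proof.
  intros [_ [H [HH [HN Hmeet]]]] Hfin.
  set (f := fun k => proj1_sig (constructive_indefinite_description _
                                  (bead_nonempty H Hmeet (2 * k)))).
  assert (Hf : forall k, H (2 * k) (f k))
    by (intros k; exact (proj2_sig (constructive_indefinite_description _ _))).
  apply (injective_range_infinite f).
  - intros i j E. destruct (proj1 (Hmeet (2 * i) (2 * j))) as [H1 H2]; [|lia].
    exists (f i). split; auto. rewrite E. auto.
  - apply finite_subset with (B := N); auto.
    intros x [n <-]. apply HN. eauto.
Qed.

Lemma tail_exists (N X : V -> Prop) : necklace F N -> finite_set X -> exists K, Defs.tail F N X K.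
Proof.
  intros [_ [H [HH [HN Hmeet]]]] [l Hl].
  destruct (beads_eventually_avoid H Hmeet l) as [n0 Hn0].
  set (T := fun x => exists n, n0 <= n /\ H n x).
  assert (Hnext : forall i, exists x, H i x /\ H (S i) x) by (intros i; apply Hmeet; lia).
  assert (HTc : connected F T).
  { assert (Hup : forall a b x y, n0 <= a -> a <= b -> H a x -> H b y ->
                  exists C, F C /\ subset C T /\ C x /\ C y).
    { intros a b x y Ha Hab Hx Hy. replace b with (a + (b - a)) in Hy by lia.
      destruct (beads_connected H (fun n => proj2 (HH n)) Hnext (b - a) a x y Hx Hy)
        as [C [FC [SC [Cx Cy]]]].
      exists C. repeat split; auto. intros u Cu. destruct (SC u Cu) as [n [Hn Hu]].
      exists n. split; auto. lia. }
    intros x y [a [Ha Hx]] [b [Hb Hy]]. destruct (le_ge_dec a b).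
    - apply (Hup a b x y); auto.
    - destruct (Hup b a y x) as [C [? [? [? ?]]]]; auto; try lia. exists C; auto. }
  destruct (bead_nonempty H Hmeet n0) as [t0 Ht0].
  destruct (component_exists (setminus N X) T t0 HTc) as [K [HK HTK]].
  - intros x [n [Hn Hx]]. split; [apply HN; eauto|].
    intros Xx. apply (Hn0 n Hn x Hx). auto.
  - exists n0. auto.
  - exists K. split; auto.
    apply finite_subset with (B := fun x => exists n, n < n0 /\ H n x).
    + apply finite_union_lt. intros n; apply HH.
    + intros x [Nx Kx]. destruct (proj1 (HN x) Nx) as [n Hn].
      exists n. split; auto. destruct (lt_dec n n0); auto.
      exfalso. apply Kx. apply HTK. exists n. split; auto. lia.
Qed.

Lemma tails_meet (N X Y K K' : V -> Prop) : necklace F N ->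
  Defs.tail F N X K -> Defs.tail F N Y K' -> exists x, K x /\ K' x.
Proof.
  intros HN [_ HK] [_ HK']. apply (cofinite_in_infinite_meet N); auto.
  apply necklace_infinite. exact HN.
Qed.

Lemma tail_avoids (N X K : V -> Prop) : Defs.tail F N X K -> subset K (fun y => ~ X y).
Proof. intros [HK _] y Ky. apply (component_sub _ _ HK y Ky). Qed.

Lemma tail_connected (N X K : V -> Prop) : Defs.tail F N X K -> connected F K.
Proof. intros [HK _]. exact (component_connected _ _ HK). Qed.

Lemma tail_in_component (N X K : V -> Prop) : necklace F N -> Defs.tail F N X K ->
  exists D, component F (fun y => ~ X y) D /\ subset K D.
Proof.
  intros HN HK. destruct (tails_meet N X X K K HN HK HK) as [x [Kx _]].
  exact (component_exists _ K x (tail_connected _ _ _ HK) (tail_avoids _ _ _ HK) Kx).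
Qed.

Lemma tail_in_component_of (N X K K' D : V -> Prop) : necklace F N ->
  Defs.tail F N X K -> Defs.tail F N X K' -> component F (fun y => ~ X y) D -> subset K D ->
  subset K' D.
Proof.
  intros HN HK HK' HD HKD. apply (component_absorbs _ D K' HD).
  - exact (tail_connected _ _ _ HK').
  - exact (tail_avoids _ _ _ HK').
  - destruct (tails_meet N X X K' K HN HK' HK) as [x [K'x Kx]]. eauto.
Qed.

Lemma necklace_equiv_refl (N : V -> Prop) : necklace F N -> necklace_equiv F N N.
Proof.
  intros HN X HX K K' HK HK'.
  destruct (tail_in_component N X K HN HK) as [D [HD HKD]].
  exists D. split; [exact HD|split; [exact HKD|]].
  exact (tail_in_component_of N X K K' D HN HK HK' HD HKD).
Qed.

Definition end_of_necklace (N : V -> Prop) (HN : necklace F N) : cend F :=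
  exist _ (fun N' => necklace F N' /\ necklace_equiv F N N')
    (ex_intro _ N (conj HN (fun N' => iff_refl _))).

Lemma cend_representative (nu : cend F) : exists N, necklace F N /\ proj1_sig nu N /\
  forall M, proj1_sig nu M -> necklace_equiv F N M.
Proof.
  destruct nu as [E [N [HN HE]]]. exists N. split; [exact HN|split].
  - apply HE. split; auto. apply necklace_equiv_refl; auto.
  - intros M HM. apply HE. auto.
Qed.

Lemma KX_component (X : V -> Prop) nu D : KX F X nu D -> component F (fun x => ~ X x) D.
Proof. intros [H _]. exact H. Qed.

Lemma KX_avoids (X : V -> Prop) nu D x : KX F X nu D -> D x -> ~ X x.
Proof. intros HD Dx. exact (component_sub _ _ (KX_component _ _ _ HD) x Dx). Qed.

Lemma KX_exists (nu : cend F) (X : V -> Prop) : finite_set X -> exists D, KX F X nu D.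
Proof.
  intros HX. destruct (cend_representative nu) as [N [HN [_ Hequiv]]].
  destruct (tail_exists N X HN HX) as [K HK].
  destruct (tail_in_component N X K HN HK) as [D [HD HKD]].
  exists D. split; auto. intros M HM K' HK'.
  destruct (Hequiv M HM X HX K K' HK HK') as [D' [HD' [HKD' HK'D']]].
  intros y K'y. apply (components_meet_sub _ D D' HD HD'); auto.
  destruct (tails_meet N X X K K HN HK HK) as [x [Kx _]]. eauto.
Qed.

Lemma KX_meet (nu : cend F) X Y D D' : finite_set X -> finite_set Y ->
  KX F X nu D -> KX F Y nu D' -> exists x, D x /\ D' x.
Proof.
  intros HX HY [_ HD] [_ HD'].
  destruct (cend_representative nu) as [N [HN [HNnu _]]].
  destruct (tail_exists N X HN HX) as [K HK].
  destruct (tail_exists N Y HN HY) as [K' HK'].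
  destruct (tails_meet N X Y K K' HN HK HK') as [x [Kx K'x]].
  exists x. split; [apply (HD N HNnu K HK)|apply (HD' N HNnu K' HK')]; auto.
Qed.

Lemma KX_antimono (nu : cend F) Y Z D D' : finite_set Y -> finite_set Z ->
  subset Y Z -> KX F Z nu D -> KX F Y nu D' -> subset D D'.
Proof.
  intros HY HZ HYZ HD HD'. apply (component_absorbs _ _ _ (KX_component _ _ _ HD')).
  - exact (component_connected _ _ (KX_component _ _ _ HD)).
  - intros x Dx Yx. exact (KX_avoids _ _ _ x HD Dx (HYZ x Yx)).
  - destruct (KX_meet nu Z Y D D' HZ HY HD HD') as [x Hx]. eauto.
Qed.

Definition KX_meet_everywhere (nu mu : cend F) : Prop :=
  forall X, finite_set X -> exists D D', KX F X nu D /\ KX F X mu D' /\ exists x, D x /\ D' x.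

Lemma KX_meet_everywhere_sym nu mu : KX_meet_everywhere nu mu -> KX_meet_everywhere mu nu.
Proof.
  intros H X HX. destruct (H X HX) as [D [D' [HD [HD' [x [Dx D'x]]]]]].
  exists D', D. split; [exact HD'|split; [exact HD|eauto]].
Qed.

Lemma necklace_equiv_of_KX_meet nu mu N M : KX_meet_everywhere nu mu ->
  proj1_sig nu N -> proj1_sig mu M -> necklace_equiv F N M.
Proof.
  intros Hmeet HN HM X HX K K' HK HK'.
  destruct (Hmeet X HX) as [D [D' [HD [HD' [x [Dx D'x]]]]]].
  exists D. split; [exact (KX_component _ _ _ HD)|split].
  - exact (proj2 HD N HN K HK).
  - intros y K'y.
    apply (components_meet_sub _ D D' (KX_component _ _ _ HD) (KX_component _ _ _ HD')).
    + eauto.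
    + exact (proj2 HD' M HM K' HK' y K'y).
Qed.

Lemma cend_eq (nu mu : cend F) : KX_meet_everywhere nu mu -> nu = mu.
Proof.
  intros Hmeet. pose proof (KX_meet_everywhere_sym _ _ Hmeet) as Hmeet'.
  destruct nu as [E [N [HN HE]]], mu as [E' [N' [HN' HE']]].
  assert (HNE : E N) by (apply HE; split; auto; apply necklace_equiv_refl; auto).
  assert (HNE' : E' N') by (apply HE'; split; auto; apply necklace_equiv_refl; auto).
  assert (EE : E = E').
  { apply functional_extensionality. intros M. apply propositional_extensionality. split.
    - intros HM. apply HE'. split; [apply HE, HM|].
      exact (necklace_equiv_of_KX_meet _ _ N' M Hmeet' HNE' HM).
    - intros HM. apply HE. split; [apply HE', HM|].
      exact (necklace_equiv_of_KX_meet _ _ N M Hmeet HNE HM). }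
  subst E'. f_equal. apply proof_irrelevance.
Qed.

Lemma converges_unique (Y : V -> Prop) (nu mu : cend F) :
  converges F Y nu -> converges F Y mu -> nu = mu.
Proof.
  intros [Hinf Hnu] [_ Hmu]. apply cend_eq. intros X HX.
  destruct (Hnu X HX) as [D [HD HYD]]. destruct (Hmu X HX) as [D' [HD' HYD']].
  exists D, D'. split; [exact HD|split; [exact HD'|]].
  exact (cofinite_in_infinite_meet Y D D' Hinf HYD HYD').
Qed.

Lemma converges_end_of_necklace (N : V -> Prop) (HN : necklace F N) (Y : V -> Prop) :
  ~ finite_set Y -> finite_set (setminus Y N) -> converges F Y (end_of_necklace N HN).
Proof.
  intros Hinf HYN. split; auto. intros X HX.
  destruct (KX_exists (end_of_necklace N HN) X HX) as [D HD].
  destruct (tail_exists N X HN HX) as [K HK].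
  assert (HKD : subset K D).
  { apply (proj2 HD N); auto. split; auto. apply necklace_equiv_refl; auto. }
  exists D. split; auto.
  apply finite_subset with (B := fun x => setminus Y N x \/ setminus N K x).
  - apply finite_union; auto. destruct HK; auto.
  - intros y [Yy Dy]. destruct (classic (N y)) as [Ny|Ny].
    + right. split; auto.
    + left. split; auto.
Qed.

Lemma converges_eventually (C : nat -> V) nu : (forall n m, C n = C m -> n = m) ->
  converges F (ray_set C) nu -> forall X, finite_set X ->
  exists D, KX F X nu D /\ exists n0, forall k, n0 <= k -> D (C k).
Proof.
  intros Hinj [_ Hc] X HX. destruct (Hc X HX) as [D [HD Hf]].
  exists D. split; auto.
  destruct (injective_eventually_avoids C _ Hinj Hf) as [n0 Hn0]. exists n0. intros k Hk.
  apply NNPP. intros Hno. apply (Hn0 k Hk). split; auto. exists k. auto.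
Qed.

End Connectoid.

Section Lists.
Context {A : Type}.

Lemma last_In (l : list A) d : l <> [] -> In (last l d) l.
Proof.
  induction l as [|a l IH]; intros H; [congruence|].
  destruct l as [|b l]; simpl; [auto|]. right. apply IH. discriminate.
Qed.

Lemma last_cons_default (a : A) l d d' : last (a :: l) d = last (a :: l) d'.
Proof.
  revert a. induction l as [|b l IH]; intros a; [reflexivity|].
  change (last (b :: l) d = last (b :: l) d'). apply IH.
Qed.

Lemma last_app_nonnil (l1 l2 : list A) d : l2 <> [] -> last (l1 ++ l2) d = last l2 d.
Proof.
  induction l1 as [|a l1 IH]; intros H; simpl; auto.
  destruct l1; simpl.
  - destruct l2; [congruence|reflexivity].
  - rewrite <- IH by auto. reflexivity.
Qed.

Lemma nth_pred_length (l : list A) d : l <> [] -> nth (length l - 1) l d = last l d.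
Proof.
  induction l as [|a l IH]; intros H; [congruence|].
  destruct l as [|b l]; [reflexivity|].
  simpl length. replace (S (S (length l)) - 1) with (S (length (b :: l) - 1)) by (simpl; lia).
  apply IH. discriminate.
Qed.

Lemma NoDup_app_disjoint (l1 l2 : list A) a : NoDup (l1 ++ l2) -> In a l1 -> ~ In a l2.
Proof.
  induction l1 as [|b l1 IH]; simpl; intros H H1 H2; [auto|].
  inversion H as [|? ? Hn Hd]; subst. destruct H1 as [<-|E].
  - apply Hn. apply in_or_app; auto.
  - exact (IH Hd E H2).
Qed.

Lemma first_common (p q : list A) : (exists w, In w p /\ In w q) ->
  exists a z b, p = a ++ z :: b /\ In z q /\ forall w, In w a -> ~ In w q.
Proof.
  induction p as [|h p IH]; intros [w [Hwp Hwq]]; [destruct Hwp|].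
  destruct (classic (In h q)) as [Hh|Hh].
  - exists [], h, p. auto.
  - destruct Hwp as [<-|Hwp]; [contradiction|].
    destruct IH as [a [z [b [E [Hz Ha]]]]]; eauto.
    exists (h :: a), z, b. split; [subst; auto|split; auto].
    intros u [<-|Hu]; auto.
Qed.

Lemma NoDup_joined_branches (x z : A) a b c d :
  NoDup (a ++ z :: b) -> NoDup (c ++ z :: d) -> ~ In x (a ++ z :: b) -> ~ In x (c ++ z :: d) ->
  (forall w, In w a -> ~ In w (c ++ z :: d)) -> NoDup (x :: a ++ z :: rev c).
Proof.
  intros Hn1 Hn2 Hx1 Hx2 Ha. constructor.
  - intros Hx. apply in_app_or in Hx. destruct Hx as [Hx|[<-|Hx]].
    + apply Hx1. apply in_or_app. auto.
    + apply Hx1. apply in_or_app. right. left. reflexivity.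
    + apply Hx2. apply in_or_app. left. apply in_rev. auto.
  - apply NoDup_app.
    + eapply NoDup_app_remove_r; eauto.
    + constructor.
      * intros Hz. apply in_rev in Hz. apply NoDup_remove_2 in Hn2. apply Hn2, in_or_app. auto.
      * apply NoDup_rev. eapply NoDup_app_remove_r; eauto.
    + intros w Hwa [Hw|Hw]; apply (Ha w Hwa), in_or_app.
      * right. left. exact Hw.
      * left. apply in_rev. exact Hw.
Qed.

End Lists.

Section Chains.
Context {V : Type} (adj : V -> V -> Prop).

Lemma chain_app_cons (l1 : list V) y l2 :
  chain adj (l1 ++ y :: l2) <-> chain adj (l1 ++ [y]) /\ chain adj (y :: l2).
Proof.
  induction l1 as [|a l1 IH]; [simpl; tauto|].
  destruct l1 as [|b l1]; [simpl; tauto|].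
  change (adj a b /\ chain adj ((b :: l1) ++ y :: l2) <->
          (adj a b /\ chain adj ((b :: l1) ++ [y])) /\ chain adj (y :: l2)).
  rewrite IH. tauto.
Qed.

Lemma chain_app_l (l1 l2 : list V) : chain adj (l1 ++ l2) -> chain adj l1.
Proof.
  destruct l2 as [|y l2]; [rewrite app_nil_r; auto|].
  intros H. apply chain_app_cons in H. destruct H as [H _].
  destruct l1 as [|a l1]; [simpl; auto|].
  revert a H. induction l1 as [|b l1 IH]; intros a H; [simpl; auto|].
  destruct H as [H1 H2]. split; auto.
Qed.

Lemma chain_snoc (l : list V) y d : chain adj l -> l <> [] -> adj (last l d) y ->
  chain adj (l ++ [y]).
Proof.
  induction l as [|a l IH]; intros H Hne Hadj; [congruence|].
  destruct l as [|b l]; [simpl in *; auto|].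
  destruct H as [H1 H2]. change (adj a b /\ chain adj ((b :: l) ++ [y])). split; auto.
  apply IH; auto. discriminate.
Qed.

Lemma chain_cons (x : V) l : chain adj l -> (forall h, hd_error l = Some h -> adj x h) ->
  chain adj (x :: l).
Proof. destruct l as [|h l]; simpl; auto. Qed.

Lemma chain_rev : (forall x y, adj x y -> adj y x) -> forall l, chain adj l -> chain adj (rev l).
Proof.
  intros Hsym l. induction l as [|a l IH]; intros H; [simpl; auto|].
  simpl. destruct l as [|b l]; [simpl; auto|].
  destruct H as [H1 H2]. apply chain_snoc with (d := a); auto.
  - simpl. intros E. apply app_eq_nil in E. destruct E; discriminate.
  - change (rev (b :: l)) with (rev l ++ [b]). rewrite last_last. auto.
Qed.

Lemma chain_nth (l : list V) d : chain adj l -> forall i, S i < length l ->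
  adj (nth i l d) (nth (S i) l d).
Proof.
  induction l as [|a l IH]; intros H i Hi; simpl in Hi; [lia|].
  destruct l as [|b l]; simpl in Hi; [lia|].
  destruct H as [H1 H2]. destruct i as [|i]; [exact H1|].
  apply IH; auto. simpl. lia.
Qed.

Lemma tpath_head (x y : V) p : tpath adj x y p -> exists l, p = x :: l.
Proof. intros [H _]. destruct p; simpl in H; inversion H; subst; eauto. Qed.

Lemma tpath_behead (x x1 y : V) l : tpath adj x y (x :: x1 :: l) ->
  tpath adj x1 y (x1 :: l) /\ adj x x1.
Proof.
  intros [H1 [H2 [H3 [H4 H5]]]]. split; auto.
  split; [reflexivity|split; [|split]]; auto.
  - rewrite <- H2. exact (last_cons_default x1 l x1 x).
  - inversion H3; auto.
Qed.

Lemma tpath_prefix x y l1 l2 : tpath adj x y (l1 ++ l2) -> l1 <> [] -> tpath adj x (last l1 x) l1.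
Proof.
  intros [H1 [H2 [H3 H4]]] Hne. split; [|split; [reflexivity|split]].
  - destruct l1; [congruence|]. auto.
  - eapply NoDup_app_remove_r; eauto.
  - eapply chain_app_l; eauto.
Qed.

End Chains.

Section Tree.
Context {V : Type} {VT : V -> Prop} {adj : V -> V -> Prop} {root : V}.
Hypothesis Ht : rooted_tree VT adj root.

(* Two paths leaving [x] through different neighbours and meeting again close a cycle. *)
Lemma no_two_branches (x x1 x1' y : V) (p q : list V) :
  adj x x1 -> adj x x1' -> x1 <> x1' ->
  hd_error p = Some x1 -> hd_error q = Some x1' -> NoDup p -> NoDup q ->
  chain adj p -> chain adj q -> In y p -> In y q -> ~ In x p -> ~ In x q -> False.
Proof.
  intros Ha1 Ha2 Hne Hh1 Hh2 Hn1 Hn2 Hc1 Hc2 Hy1 Hy2 Hx1 Hx2.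
  destruct (first_common p q) as [a [z [b [Ep [Hzq Ha]]]]]; eauto.
  destruct (in_split z q Hzq) as [c [d Eq]]. subst p q.
  apply (rt_acyc VT adj root Ht (x :: a ++ z :: rev c)).
  assert (Hc2' : chain adj (c ++ [z])) by (apply chain_app_cons in Hc2; tauto).
  assert (Hhd : hd_error (c ++ [z]) = Some x1') by (rewrite <- Hh2; destruct c; reflexivity).
  destruct (c ++ [z]) as [|h m] eqn:Ecz; [discriminate|]. injection Hhd as ->.
  assert (Erev : z :: rev c = rev m ++ [x1']).
  { change (z :: rev c = rev (x1' :: m)). rewrite <- Ecz, rev_app_distr. reflexivity. }
  split; [|split; [|split]].
  - simpl. rewrite length_app. simpl.
    destruct a as [|a0 a]; destruct c as [|c0 c]; simpl; rewrite ?length_app, ?length_rev; simpl;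
      try lia.
    exfalso. apply Hne. simpl in *. congruence.
  - apply NoDup_joined_branches with (b := b) (d := d); auto.
  - change (chain adj ((x :: a) ++ z :: rev c)). apply chain_app_cons. split.
    + apply chain_cons.
      * apply chain_app_cons in Hc1. tauto.
      * intros h Hh. destruct a; simpl in *; congruence.
    + rewrite Erev. change (chain adj (rev (x1' :: m))).
      apply chain_rev; [apply (rt_sym VT adj root Ht)|exact Hc2'].
  - exists x. split; [reflexivity|].
    replace (x :: a ++ z :: rev c) with (((x :: a) ++ rev m) ++ [x1']).
    + rewrite last_last. apply (rt_sym VT adj root Ht). auto.
    + rewrite Erev. simpl. rewrite <- app_assoc. reflexivity.
Qed.

Lemma tpath_unique (p : list V) : forall x y q, tpath adj x y p -> tpath adj x y q -> p = q.
Proof.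
  induction p as [|h p1 IH]; intros x y q Hp Hq; [destruct Hp as [H _]; discriminate|].
  destruct (tpath_head _ _ _ _ Hp) as [l El]. injection El as -> <-.
  destruct (tpath_head _ _ _ _ Hq) as [q1 ->].
  assert (Hback : forall x1 l', tpath adj x x (x :: x1 :: l') -> False).
  { intros x1 l' [_ [Hl [Hn _]]]. inversion Hn as [|? ? Hnx _]; subst.
    apply Hnx. rewrite <- Hl at 1. exact (last_In (x1 :: l') x ltac:(discriminate)). }
  destruct p1 as [|x1 p2], q1 as [|x1' q2]; auto.
  - destruct Hp as [_ [Hy _]]. simpl in Hy. subst y. exfalso. eapply Hback; eauto.
  - destruct Hq as [_ [Hy _]]. simpl in Hy. subst y. exfalso. eapply Hback; eauto.
  - destruct (tpath_behead _ _ _ _ _ Hp) as [Hp' Ha1].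
    destruct (tpath_behead _ _ _ _ _ Hq) as [Hq' Ha2].
    destruct (classic (x1 = x1')) as [<-|Hne]; [f_equal; eapply IH; eauto|exfalso].
    destruct Hp as [_ [_ [Hn1 _]]], Hq as [_ [_ [Hn2 _]]].
    destruct Hp' as [_ [Hl1 [Hn1' Hc1]]], Hq' as [_ [Hl2 [Hn2' Hc2]]].
    apply (no_two_branches x x1 x1' y (x1 :: p2) (x1' :: q2)); auto.
    + rewrite <- Hl1. apply last_In. discriminate.
    + rewrite <- Hl2. apply last_In. discriminate.
    + inversion Hn1; auto.
    + inversion Hn2; auto.
Qed.

Definition root_path (v : V) : list V := epsilon (inhabits []) (tpath adj root v).

Definition depth (v : V) : nat := length (root_path v).

Definition ancestors (v : V) : V -> Prop := fun x => tle adj root x v.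

Definition child (v c : V) : Prop := root_path c = root_path v ++ [c].

Lemma root_path_spec v : VT v -> tpath adj root v (root_path v).
Proof. intros Hv. unfold root_path. apply epsilon_spec. exact (rt_conn VT adj root Ht v Hv). Qed.

Lemma root_path_unique v p : VT v -> tpath adj root v p -> p = root_path v.
Proof. intros Hv Hp. exact (tpath_unique p _ _ _ Hp (root_path_spec v Hv)). Qed.

Lemma chain_VT a l : VT a -> chain adj (a :: l) -> forall w, In w (a :: l) -> VT w.
Proof.
  revert a. induction l as [|b l IH]; intros a Ha Hc w Hw.
  - destruct Hw as [<-|[]]. exact Ha.
  - destruct Hc as [Hab Hc]. destruct Hw as [<-|Hw]; [exact Ha|].
    exact (IH b (proj2 (rt_dom VT adj root Ht a b Hab)) Hc w Hw).
Qed.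

Lemma tpath_from_root_VT y p : tpath adj root y p -> forall w, In w p -> VT w.
Proof.
  intros Hp. destruct (tpath_head _ _ _ _ Hp) as [l ->]. destruct Hp as [_ [_ [_ Hc]]].
  exact (chain_VT root l (rt_root VT adj root Ht) Hc).
Qed.

Lemma root_path_VT y w : VT y -> In w (root_path y) -> VT w.
Proof. intros Hy. exact (tpath_from_root_VT y _ (root_path_spec y Hy) w). Qed.

Lemma root_path_last v : VT v -> last (root_path v) root = v.
Proof. intros Hv. apply (root_path_spec v Hv). Qed.

Lemma root_path_nonnil v : VT v -> root_path v <> [].
Proof. intros Hv E. pose proof (root_path_spec v Hv) as [H _]. rewrite E in H. discriminate. Qed.

Lemma root_path_self v : VT v -> In v (root_path v).
Proof.
  intros Hv. rewrite <- (root_path_last v Hv) at 1. apply last_In, root_path_nonnil, Hv.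
Qed.

Lemma root_path_inj x y : VT x -> VT y -> root_path x = root_path y -> x = y.
Proof. intros Hx Hy E. rewrite <- (root_path_last x Hx), <- (root_path_last y Hy), E. auto. Qed.

Lemma root_path_root : root_path root = [root].
Proof.
  symmetry. apply root_path_unique; [apply (rt_root VT adj root Ht)|].
  repeat split. constructor; [intros []|constructor].
Qed.

Lemma tle_iff x y : VT y -> tle adj root x y <-> In x (root_path y).
Proof.
  intros Hy. split.
  - intros [p [Hp Hx]]. rewrite <- (root_path_unique y p Hy Hp). auto.
  - intros H. exists (root_path y). split; auto. apply root_path_spec; auto.
Qed.

Lemma tle_VT x y : tle adj root x y -> VT x /\ VT y.
Proof.
  intros [p [Hp Hx]]. split; [exact (tpath_from_root_VT y p Hp x Hx)|].
  apply (tpath_from_root_VT y p Hp). rewrite <- (proj1 (proj2 Hp)). apply last_In.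
  destruct Hp as [H _]. destruct p; discriminate.
Qed.

Lemma tle_refl v : VT v -> tle adj root v v.
Proof. intros Hv. apply tle_iff, root_path_self; exact Hv. Qed.

Lemma root_tle v : VT v -> tle adj root root v.
Proof.
  intros Hv. apply tle_iff; auto. destruct (tpath_head _ _ _ _ (root_path_spec v Hv)) as [l ->].
  left. reflexivity.
Qed.

Lemma root_path_split y w l1 l2 : VT y -> root_path y = l1 ++ w :: l2 ->
  root_path w = l1 ++ [w].
Proof.
  intros Hy E. assert (Hw : VT w) by (apply (root_path_VT y w Hy); rewrite E; apply in_elt).
  pose proof (root_path_spec y Hy) as Hp.
  rewrite E, (app_assoc l1 [w] l2 : l1 ++ w :: l2 = (l1 ++ [w]) ++ l2) in Hp.
  apply tpath_prefix in Hp; [rewrite last_last in Hp|].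
  - symmetry. exact (root_path_unique w _ Hw Hp).
  - intros E'. apply app_eq_nil in E'. destruct E'; discriminate.
Qed.

Lemma root_path_prefix y w : VT y -> In w (root_path y) -> exists q, root_path y = root_path w ++ q.
Proof.
  intros Hy Hw. destruct (in_split w (root_path y) Hw) as [l1 [l2 E]].
  exists l2. rewrite (root_path_split y w l1 l2 Hy E), <- app_assoc. exact E.
Qed.

Lemma tle_prefix x y : tle adj root x y -> exists q, root_path y = root_path x ++ q.
Proof.
  intros H. destruct (tle_VT x y H) as [Hx Hy]. apply tle_iff in H; auto.
  apply root_path_prefix; auto.
Qed.

Lemma prefix_tle x y q : VT x -> VT y -> root_path y = root_path x ++ q -> tle adj root x y.
Proof.
  intros Hx Hy E. apply tle_iff; auto. rewrite E. apply in_or_app. left. apply root_path_self; auto.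
Qed.

Lemma tle_trans x y z : tle adj root x y -> tle adj root y z -> tle adj root x z.
Proof.
  intros H1 H2. destruct (tle_VT x y H1) as [Hx _], (tle_VT y z H2) as [_ Hz].
  destruct (tle_prefix x y H1) as [a E1], (tle_prefix y z H2) as [b E2].
  apply (prefix_tle x z (a ++ b)); auto. rewrite E2, E1, app_assoc. auto.
Qed.

Lemma tle_total a b x : tle adj root a x -> tle adj root b x ->
  tle adj root a b \/ tle adj root b a.
Proof.
  intros Ha Hb. destruct (tle_VT a x Ha) as [Hva _], (tle_VT b x Hb) as [Hvb _].
  destruct (tle_prefix a x Ha) as [qa Ea], (tle_prefix b x Hb) as [qb Eb].
  rewrite Ea in Eb. apply app_eq_app in Eb. destruct Eb as [l [[E _]|[E _]]].
  - right. exact (prefix_tle b a l Hvb Hva E).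
  - left. exact (prefix_tle a b l Hva Hvb E).
Qed.

Lemma tle_depth x y : tle adj root x y -> depth x <= depth y.
Proof.
  intros H. destruct (tle_prefix x y H) as [q E]. unfold depth. rewrite E, length_app. lia.
Qed.

Lemma tle_depth_eq x y : tle adj root x y -> depth x = depth y -> x = y.
Proof.
  intros H Hd. destruct (tle_VT x y H) as [Hx Hy]. destruct (tle_prefix x y H) as [q E].
  unfold depth in Hd. rewrite E, length_app in Hd.
  destruct q; [|simpl in Hd; lia]. rewrite app_nil_r in E. apply root_path_inj; auto.
Qed.

Lemma depth_pos v : VT v -> 1 <= depth v.
Proof.
  intros Hv. unfold depth. destruct (root_path v) eqn:E; [|simpl; lia].
  exfalso. exact (root_path_nonnil v Hv E).
Qed.

Lemma root_path_snoc x y : VT x -> adj x y -> ~ In y (root_path x) -> child x y.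
Proof.
  intros Hx Hxy Hy. symmetry.
  apply root_path_unique; [exact (proj2 (rt_dom VT adj root Ht x y Hxy))|].
  pose proof (root_path_spec x Hx) as [H1 [H2 [H3 H4]]]. split; [|split; [|split]].
  - destruct (root_path x); [discriminate|]. auto.
  - apply last_last.
  - apply NoDup_app; auto; [repeat constructor; intros []|].
    intros a Ha [<-|[]]. auto.
  - apply chain_snoc with (d := root); auto. apply root_path_nonnil; auto. rewrite H2. auto.
Qed.

Lemma adj_child x y : adj x y -> child x y \/ child y x.
Proof.
  intros Hxy. destruct (rt_dom VT adj root Ht x y Hxy) as [Hx Hy].
  destruct (classic (In y (root_path x))) as [Hin|Hin]; [right|left; apply root_path_snoc; auto].
  apply root_path_snoc; auto; [apply (rt_sym VT adj root Ht); auto|].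
  intros Hx'. destruct (root_path_prefix x y Hx Hin) as [[|a q] E].
  - rewrite app_nil_r in E. apply (rt_irrefl VT adj root Ht x).
    rewrite (root_path_inj x y Hx Hy E) at 2. auto.
  - apply (NoDup_app_disjoint (root_path y) (a :: q) x); auto.
    + rewrite <- E. apply (root_path_spec x Hx).
    + rewrite <- (root_path_last x Hx) at 1. rewrite E, last_app_nonnil by discriminate.
      apply last_In. discriminate.
Qed.

Lemma child_adj v c : VT v -> VT c -> child v c -> adj v c.
Proof.
  intros Hv Hc E. pose proof (root_path_spec c Hc) as [_ [_ [_ Hch]]].
  rewrite E, (app_removelast_last root (root_path_nonnil v Hv)), root_path_last, <- app_assoc
    in Hch by exact Hv.
  apply chain_app_cons in Hch. destruct Hch as [_ [H _]]. exact H.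
Qed.

Lemma child_depth v c : child v c -> depth c = S (depth v).
Proof. intros E. unfold depth. rewrite E, length_app. simpl. lia. Qed.

Lemma child_tle v c : VT v -> VT c -> child v c -> tle adj root v c.
Proof. intros Hv Hc E. exact (prefix_tle v c [c] Hv Hc E). Qed.

Lemma child_toward x u : tle adj root x u -> x <> u ->
  exists c, VT c /\ child x c /\ tle adj root c u.
Proof.
  intros Hxu Hne. destruct (tle_VT x u Hxu) as [Hx Hu].
  destruct (tle_prefix x u Hxu) as [[|c q] E].
  - exfalso. apply Hne, root_path_inj; auto. rewrite E, app_nil_r. auto.
  - assert (Hc : VT c) by (apply (root_path_VT u c Hu); rewrite E; apply in_elt).
    pose proof (root_path_split u c _ q Hu E) as Ec.
    exists c. split; [exact Hc|split; [exact Ec|]].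
    apply (prefix_tle c u q Hc Hu). rewrite E, Ec, <- app_assoc. reflexivity.
Qed.

Lemma child_below v c u w : child v c -> tle adj root c u -> tle adj root w u ->
  tle adj root v w -> w <> v -> tle adj root c w.
Proof.
  intros Hc Hcu Hwu Hvw Hne. destruct (tle_total c w u Hcu Hwu) as [H|Hwc]; [exact H|].
  destruct (tle_VT c u Hcu) as [HVc _].
  pose proof (tle_depth v w Hvw). pose proof (tle_depth w c Hwc). pose proof (child_depth v c Hc).
  destruct (Nat.eq_dec (depth w) (depth c)) as [Ed|Ed].
  - rewrite (tle_depth_eq w c Hwc Ed). exact (tle_refl c HVc).
  - exfalso. apply Hne. symmetry. apply (tle_depth_eq v w Hvw). lia.
Qed.

Lemma ancestors_finite v : VT v -> finite_set (ancestors v).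
Proof.
  intros Hv. exists (root_path v). intros x Hx. apply tle_iff; auto.
Qed.

Definition rooted_ray (R : nat -> V) : Prop := ray adj R /\ R 0 = root.

Lemma ray_VT R : ray adj R -> forall k, VT (R k).
Proof. intros [_ H] k. exact (proj1 (rt_dom VT adj root Ht _ _ (H k))). Qed.

Lemma rooted_ray_root_path C : rooted_ray C -> forall k, root_path (C k) = map C (seq 0 (S k)).
Proof.
  intros HC k. symmetry. apply root_path_unique; [exact (ray_VT C (proj1 HC) k)|].
  destruct HC as [[Hinj Hadj] H0].
  assert (Hlast : forall k, last (map C (seq 0 (S k))) root = C k)
    by (intros k'; rewrite seq_S, map_app; apply last_last).
  split; [|split; [|split]].
  - simpl. rewrite H0. reflexivity.
  - apply Hlast.
  - apply NoDup_map_NoDup_ForallPairs; [intros a b _ _; apply Hinj|apply seq_NoDup].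
  - induction k as [|k IH]; [simpl; auto|].
    rewrite seq_S, map_app. apply chain_snoc with (d := root); auto.
    + simpl. discriminate.
    + rewrite Hlast. auto.
Qed.

Lemma rooted_ray_depth C : rooted_ray C -> forall k, depth (C k) = S k.
Proof.
  intros HC k. unfold depth. rewrite (rooted_ray_root_path C HC k), length_map, length_seq. auto.
Qed.

Lemma tle_rooted_ray C : rooted_ray C ->
  forall x k, tle adj root x (C k) <-> exists i, i <= k /\ x = C i.
Proof.
  intros HC x k. rewrite tle_iff by exact (ray_VT C (proj1 HC) k).
  rewrite (rooted_ray_root_path C HC k), in_map_iff. split.
  - intros [i [E Hi]]. apply in_seq in Hi. exists i. split; [lia|auto].
  - intros [i [Hi E]]. exists i. split; auto. apply in_seq. lia.
Qed.

Lemma rooted_rays_meet C C' : rooted_ray C -> rooted_ray C' ->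
  forall a b, C a = C' b -> a = b /\ forall i, i <= a -> C i = C' i.
Proof.
  intros HC HC' a b E.
  assert (Eab : a = b).
  { pose proof (rooted_ray_depth C HC a) as H1. pose proof (rooted_ray_depth C' HC' b) as H2.
    rewrite E in H1. lia. }
  subst b. split; auto. intros i Hi.
  assert (Hle : tle adj root (C i) (C' a))
    by (rewrite <- E; apply (tle_rooted_ray C HC); exists i; auto).
  apply (tle_rooted_ray C' HC') in Hle. destruct Hle as [i' [_ Ei]].
  assert (i = i') as <-; [|exact Ei].
  pose proof (rooted_ray_depth C HC i). pose proof (rooted_ray_depth C' HC' i').
  rewrite Ei in *. lia.
Qed.

Lemma rooted_rays_diverge C C' : rooted_ray C -> rooted_ray C' -> C <> C' ->
  exists j, forall i i', C i = C' i' -> i < j.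
Proof.
  intros HC HC' Hne. destruct (classic (exists j, C j <> C' j)) as [[j Hj]|Hall].
  - exists j. intros i i' E. destruct (rooted_rays_meet C C' HC HC' i i' E) as [_ Hagree].
    destruct (le_lt_dec j i) as [Hji|Hij]; [exfalso; exact (Hj (Hagree j Hji))|exact Hij].
  - exfalso. apply Hne. apply functional_extensionality. intros j.
    apply NNPP. intros Hj. apply Hall. eauto.
Qed.

Definition shares_tail (A C : nat -> V) : Prop := exists a0 c0, forall i, A (a0 + i) = C (c0 + i).

Lemma shares_tail_refl C : shares_tail C C.
Proof. exists 0, 0. reflexivity. Qed.

Lemma shares_tail_equiv A B C : (forall n m, C n = C m -> n = m) ->
  shares_tail A C -> shares_tail B C -> ray_equiv adj A B.
Proof.
  intros Hinj [a0 [c0 EA]] [b0 [d0 EB]] X HX.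
  destruct (injective_eventually_avoids C X Hinj HX) as [i0 Hi0].
  set (k := i0 + c0 + d0).
  exists (a0 + (k - c0)), (b0 + (k - d0)), [C k].
  rewrite EA, EB. replace (c0 + (k - c0)) with k by lia. replace (d0 + (k - d0)) with k by lia.
  split; [|split; [|split]].
  - intros j Hj. replace j with (a0 + (j - a0)) by lia. rewrite EA. apply Hi0. lia.
  - intros j Hj. replace j with (b0 + (j - b0)) by lia. rewrite EB. apply Hi0. lia.
  - repeat split. constructor; [intros []|constructor].
  - intros z [<-|[]]. apply Hi0. lia.
Qed.

Lemma edge_preserves_above c x y : adj x y -> x <> c -> y <> c ->
  (tle adj root c x <-> tle adj root c y).
Proof.
  assert (Hup : forall x y, adj x y -> child x y -> y <> c ->
                tle adj root c x <-> tle adj root c y).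
  { intros x' y' Hxy Hc Hy'. destruct (rt_dom VT adj root Ht x' y' Hxy) as [Hx' Hy''].
    rewrite !tle_iff, Hc by assumption. rewrite in_app_iff. simpl. intuition congruence. }
  intros Hxy Hx Hy. destruct (adj_child x y Hxy) as [H|H]; [apply Hup; auto|].
  symmetry. apply Hup; auto. apply (rt_sym VT adj root Ht); auto.
Qed.

Lemma tpath_preserves_above c p a b : tpath adj a b p -> (forall z, In z p -> z <> c) ->
  (tle adj root c a <-> tle adj root c b).
Proof.
  revert a. induction p as [|h p IH]; intros a Hp Hz; [destruct Hp as [H _]; discriminate|].
  destruct (tpath_head _ _ _ _ Hp) as [l El]. injection El as -> <-.
  destruct p as [|a1 p].
  - destruct Hp as [_ [Hl _]]. simpl in Hl. subst. tauto.
  - destruct (tpath_behead _ _ _ _ _ Hp) as [Hp' Ha].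
    rewrite (edge_preserves_above c a a1 Ha); [|apply Hz; left; auto|apply Hz; right; left; auto].
    apply IH; auto. intros z Hz'. apply Hz. right. auto.
Qed.

Lemma ray_tail_preserves_above c A n : ray adj A -> (forall k, n <= k -> A k <> c) ->
  forall k, n <= k -> (tle adj root c (A n) <-> tle adj root c (A k)).
Proof.
  intros [_ Hadj] Havoid k Hk. replace k with (n + (k - n)) by lia.
  induction (k - n) as [|d IH]; [rewrite Nat.add_0_r; tauto|].
  rewrite IH, Nat.add_succ_r. apply edge_preserves_above; auto; apply Havoid; lia.
Qed.

(* Removing a vertex [C j] that is not on [C'] separates the tails of [C] and [C'] in T. *)
Lemma equiv_rays_same_rooted A B C C' : ray adj A -> ray adj B -> ray_equiv adj A B ->
  rooted_ray C -> rooted_ray C' -> shares_tail A C -> shares_tail B C' -> C = C'.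
Proof.
  intros HA HB HAB HC HC' [a0 [c0 EA]] [b0 [d0 EB]].
  apply NNPP. intros Hne. destruct (rooted_rays_diverge C C' HC HC' Hne) as [j Hj].
  destruct (HAB (fun z => z = C j)) as [n [m [p [HnA [HmB [Hp Hpz]]]]]];
    [exists [C j]; intros z ->; left; auto|].
  assert (Habove : tle adj root (C j) (A (a0 + (n + j)))).
  { rewrite EA. apply (tle_rooted_ray C HC). exists j. split; [lia|auto]. }
  rewrite <- (ray_tail_preserves_above (C j) A n HA) in Habove by (auto; lia).
  rewrite (tpath_preserves_above (C j) p (A n) (B m) Hp Hpz) in Habove.
  rewrite (ray_tail_preserves_above (C j) B m HB HmB (b0 + m)), EB in Habove by lia.
  apply (tle_rooted_ray C' HC') in Habove. destruct Habove as [i' [_ E]].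
  specialize (Hj j i' E). lia.
Qed.

Lemma ray_ascent_persists A n : ray adj A -> child (A n) (A (S n)) ->
  child (A (S n)) (A (S (S n))).
Proof.
  intros HA Hn. destruct (adj_child _ _ (proj2 HA (S n))) as [H|H]; [exact H|exfalso].
  unfold child in H, Hn. rewrite H in Hn. apply app_inj_tail in Hn. destruct Hn as [E _].
  apply root_path_inj in E; try apply (ray_VT A HA). apply (proj1 HA) in E. lia.
Qed.

(* Descending steps decrease the depth, so a ray cannot descend forever. *)
Lemma ray_eventually_ascends A : ray adj A ->
  exists a0, forall i, child (A (a0 + i)) (A (S (a0 + i))).
Proof.
  intros HA.
  assert (Hex : exists a0, child (A a0) (A (S a0))).
  { apply NNPP. intros Hno.
    assert (Hd : forall n, depth (A n) = S (depth (A (S n)))).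
    { intros n. destruct (adj_child _ _ (proj2 HA n)) as [H|H]; [exfalso; eauto|].
      exact (child_depth _ _ H). }
    assert (Hl : forall n, depth (A n) + n = depth (A 0))
      by (induction n as [|n IHn]; [lia|rewrite <- IHn, (Hd n); lia]).
    pose proof (Hl (depth (A 0))). pose proof (depth_pos _ (ray_VT A HA (depth (A 0)))). lia. }
  destruct Hex as [a0 Ha0]. exists a0. induction i as [|i IH].
  - rewrite Nat.add_0_r. exact Ha0.
  - rewrite Nat.add_succ_r. exact (ray_ascent_persists A (a0 + i) HA IH).
Qed.

Lemma ascending_root_paths_extend A a0 : (forall i, child (A (a0 + i)) (A (S (a0 + i)))) ->
  forall i d, exists q, root_path (A (a0 + (i + d))) = root_path (A (a0 + i)) ++ q.
Proof.
  intros Hup i d. induction d as [|d [q IH]].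
  - exists []. rewrite Nat.add_0_r, app_nil_r. reflexivity.
  - exists (q ++ [A (a0 + (i + S d))]). rewrite app_assoc, <- IH.
    replace (a0 + (i + S d)) with (S (a0 + (i + d))) by lia. apply Hup.
Qed.

(* The rooted ray reads off the [k]-th vertex of the root path of [A (a0 + k)]. *)
Lemma ascending_ray_rooted A a0 : ray adj A ->
  (forall i, child (A (a0 + i)) (A (S (a0 + i)))) -> exists C, rooted_ray C /\ shares_tail A C.
Proof.
  intros HA Hup.
  assert (HV : forall i, VT (A i)) by exact (ray_VT A HA).
  assert (Hlen : forall i, length (root_path (A (a0 + i))) = depth (A a0) + i).
  { induction i as [|i IH]; [rewrite !Nat.add_0_r; reflexivity|].
    rewrite Nat.add_succ_r. fold (depth (A (S (a0 + i)))). rewrite (child_depth _ _ (Hup i)).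
    unfold depth at 1. lia. }
  pose proof (depth_pos _ (HV a0)) as Hpos.
  assert (Hstable : forall i d,
    nth i (root_path (A (a0 + i))) root = nth i (root_path (A (a0 + (i + d)))) root).
  { intros i d. destruct (ascending_root_paths_extend A a0 Hup i d) as [q ->].
    rewrite app_nth1; [reflexivity|]. rewrite Hlen. lia. }
  exists (fun i => nth i (root_path (A (a0 + i))) root). split; [split; [split|]|].
  - intros i j E. cbv beta in E. rewrite (Hstable i j), (Hstable j i), (Nat.add_comm j i) in E.
    apply (proj1 (NoDup_nth (root_path (A (a0 + (i + j)))) root)) in E;
      [exact E|apply (root_path_spec _ (HV _))|rewrite Hlen; lia|rewrite Hlen; lia].
  - intros i. cbv beta. rewrite (Hstable i 1), (Hstable (S i) 0), Nat.add_0_r, Nat.add_1_r.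
    apply (chain_nth adj); [apply (root_path_spec _ (HV _))|]. rewrite Hlen. lia.
  - cbv beta. destruct (tpath_head _ _ _ _ (root_path_spec _ (HV (a0 + 0)))) as [l ->]. reflexivity.
  - exists a0, (depth (A a0) - 1). intros i. cbv beta.
    destruct (ascending_root_paths_extend A a0 Hup i (depth (A a0) - 1)) as [q E].
    rewrite (Nat.add_comm (depth (A a0) - 1) i), E, app_nth1 by (rewrite Hlen; lia).
    replace (i + (depth (A a0) - 1)) with (length (root_path (A (a0 + i))) - 1)
      by (rewrite Hlen; lia).
    rewrite nth_pred_length by apply root_path_nonnil, HV.
    symmetry. apply root_path_last, HV.
Qed.

Lemma ray_shares_tail_rooted A : ray adj A -> exists C, rooted_ray C /\ shares_tail A C.
Proof.
  intros HA. destruct (ray_eventually_ascends A HA) as [a0 Hup].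
  exact (ascending_ray_rooted A a0 HA Hup).
Qed.

Lemma ray_equiv_refl R : ray adj R -> ray_equiv adj R R.
Proof.
  intros HR. destruct (ray_shares_tail_rooted R HR) as [C [HC HRC]].
  exact (shares_tail_equiv R R C (proj1 (proj1 HC)) HRC HRC).
Qed.

Lemma tend_mem_iff (om : tend adj) C : rooted_ray C -> proj1_sig om C ->
  forall R, proj1_sig om R <-> ray adj R /\ shares_tail R C.
Proof.
  destruct om as [E [A [HA HE]]]. simpl. intros HC HCE R.
  destruct (proj1 (HE C) HCE) as [_ HAC].
  destruct (ray_shares_tail_rooted A HA) as [CA [HCA HACA]].
  assert (ECA : CA = C)
    by exact (equiv_rays_same_rooted A C CA C HA (proj1 HC) HAC HCA HC HACA (shares_tail_refl C)).
  subst CA. rewrite HE. split.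
  - intros [HR HAR]. split; [exact HR|].
    destruct (ray_shares_tail_rooted R HR) as [CR [HCR HRCR]].
    rewrite (equiv_rays_same_rooted A R C CR HA HR HAR HC HCR HACA HRCR). exact HRCR.
  - intros [HR HRC]. split; [exact HR|].
    exact (shares_tail_equiv A R C (proj1 (proj1 HC)) HACA HRC).
Qed.

Lemma rooted_ray_in_end (om : tend adj) : exists C, rooted_ray C /\ proj1_sig om C.
Proof.
  destruct om as [E [A [HA HE]]]. simpl.
  destruct (ray_shares_tail_rooted A HA) as [C [HC HAC]].
  exists C. split; [exact HC|]. apply HE. split; [exact (proj1 HC)|].
  exact (shares_tail_equiv A C C (proj1 (proj1 HC)) HAC (shares_tail_refl C)).
Qed.

Definition ray_of_end (om : tend adj) : nat -> V :=
  proj1_sig (constructive_indefinite_description _ (rooted_ray_in_end om)).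

Lemma ray_of_end_spec om : rooted_ray (ray_of_end om) /\ proj1_sig om (ray_of_end om).
Proof. exact (proj2_sig (constructive_indefinite_description _ (rooted_ray_in_end om))). Qed.

Lemma ray_of_end_unique om R : proj1_sig om R -> R 0 = root -> R = ray_of_end om.
Proof.
  intros HR HR0. destruct (ray_of_end_spec om) as [HC HCom].
  destruct (proj1 (tend_mem_iff om _ HC HCom R) HR) as [Hray HRC].
  exact (equiv_rays_same_rooted R R R _ Hray Hray (ray_equiv_refl R Hray) (conj Hray HR0) HC
           (shares_tail_refl R) HRC).
Qed.

Lemma tend_eq (om1 om2 : tend adj) : ray_of_end om1 = ray_of_end om2 -> om1 = om2.
Proof.
  intros E. destruct (ray_of_end_spec om1) as [HC1 H1], (ray_of_end_spec om2) as [HC2 H2].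
  assert (Hsets : proj1_sig om1 = proj1_sig om2).
  { apply functional_extensionality. intros R. apply propositional_extensionality.
    rewrite (tend_mem_iff om1 _ HC1 H1 R), (tend_mem_iff om2 _ HC2 H2 R), E. reflexivity. }
  destruct om1 as [E1 P1], om2 as [E2 P2]. simpl in Hsets. subst E2.
  f_equal. apply proof_irrelevance.
Qed.

Definition end_of_ray (R : nat -> V) (HR : ray adj R) : tend adj :=
  exist _ (fun R' => ray adj R' /\ ray_equiv adj R R')
    (ex_intro _ R (conj HR (fun R' => iff_refl _))).

Lemma end_of_ray_mem R (HR : ray adj R) : proj1_sig (end_of_ray R HR) R.
Proof. split; [exact HR|exact (ray_equiv_refl R HR)]. Qed.

Section NormalTree.
Context {F : (V -> Prop) -> Prop}.
Hypothesis HF : connectoid F.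
Hypothesis Hbelow : forall C u v, connected F C -> C u -> C v -> VT u -> VT v ->
  ~ tle adj root u v -> ~ tle adj root v u ->
  exists w, C w /\ tle adj root w u /\ tle adj root w v.
Hypothesis Hnecklace : forall R, ray adj R -> R 0 = root ->
  exists N, necklace F N /\ finite_set (setminus (ray_set R) N).

Lemma connected_common_lower_bound D u u' : connected F D -> D u -> D u' -> VT u -> VT u' ->
  exists w, D w /\ tle adj root w u /\ tle adj root w u'.
Proof.
  intros HD Du Du' Hu Hu'.
  destruct (classic (tle adj root u u')) as [H|H]; [exists u; auto using tle_refl|].
  destruct (classic (tle adj root u' u)) as [H'|H']; [exists u'; auto using tle_refl|].
  exact (Hbelow D u u' HD Du Du' Hu Hu' H H').
Qed.

Lemma rooted_ray_converges C : rooted_ray C -> exists nu, converges F (ray_set C) nu.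
Proof.
  intros [HC HC0]. destruct (Hnecklace C HC HC0) as [N [HN HCN]].
  exists (end_of_necklace N HN).
  exact (converges_end_of_necklace HF N HN _ (injective_range_infinite C (proj1 HC)) HCN).
Qed.

Definition eta (om : tend adj) : cend F :=
  proj1_sig (constructive_indefinite_description _
    (rooted_ray_converges (ray_of_end om) (proj1 (ray_of_end_spec om)))).

Lemma eta_converges om : converges F (ray_set (ray_of_end om)) (eta om).
Proof. exact (proj2_sig (constructive_indefinite_description _ _)). Qed.

Lemma eta_in_closure om : in_closure F VT (eta om).
Proof.
  intros X HX. destruct (ray_of_end_spec om) as [HC _].
  destruct (converges_eventually _ _ (proj1 (proj1 HC)) (eta_converges om) X HX)
    as [D [HD [n0 Hn0]]].
  exists D. split; [exact HD|]. exists (ray_of_end om n0).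
  split; [apply Hn0; lia|exact (ray_VT _ (proj1 HC) n0)].
Qed.

Lemma eta_injective om1 om2 : eta om1 = eta om2 -> om1 = om2.
Proof.
  intros E. apply tend_eq.
  destruct (ray_of_end_spec om1) as [HC1 _], (ray_of_end_spec om2) as [HC2 _].
  set (C1 := ray_of_end om1) in *. set (C2 := ray_of_end om2) in *.
  apply NNPP. intros Hne. destruct (rooted_rays_diverge C1 C2 HC1 HC2 Hne) as [j Hj].
  set (X := ancestors (C1 j)).
  assert (HX : finite_set X) by exact (ancestors_finite _ (ray_VT C1 (proj1 HC1) j)).
  destruct (converges_eventually _ _ (proj1 (proj1 HC1)) (eta_converges om1) X HX)
    as [D1 [HD1 [n1 Hn1]]].
  pose proof (eta_converges om2) as Hc2. rewrite <- E in Hc2.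
  destruct (converges_eventually _ _ (proj1 (proj1 HC2)) Hc2 X HX) as [D2 [HD2 [n2 Hn2]]].
  set (a := n1 + n2).
  assert (HD1a : D1 (C2 a)).
  { apply (components_meet_sub HF _ D1 D2 (KX_component _ _ _ HD1) (KX_component _ _ _ HD2)).
    - exact (KX_meet HF (eta om1) X X D1 D2 HX HX HD1 HD2).
    - apply Hn2. lia. }
  destruct (connected_common_lower_bound D1 (C1 a) (C2 a)) as [w [Dw [Hw1 Hw2]]];
    [exact (component_connected _ _ (KX_component _ _ _ HD1))|apply Hn1; lia|exact HD1a
    |exact (ray_VT C1 (proj1 HC1) a)|exact (ray_VT C2 (proj1 HC2) a)|].
  apply (tle_rooted_ray C1 HC1) in Hw1. destruct Hw1 as [i1 [_ ->]].
  apply (tle_rooted_ray C2 HC2) in Hw2. destruct Hw2 as [i2 [_ E12]].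
  apply (KX_avoids X _ D1 _ HD1 Dw). apply (tle_rooted_ray C1 HC1).
  exists i1. split; [pose proof (Hj i1 i2 E12); lia|reflexivity].
Qed.

Section Surjective.
Variable nu : cend F.
Hypothesis Hcl : in_closure F VT nu.

Definition toward_end (v c : V) : Prop :=
  VT c /\ child v c /\
  exists D u, KX F (ancestors v) nu D /\ D u /\ VT u /\ tle adj root c u.

Definition next_toward_end (v : V) : V := epsilon (inhabits root) (toward_end v).

Definition end_ray (k : nat) : V := Nat.iter k next_toward_end root.

Definition end_above (v : V) : Prop :=
  VT v /\ forall D u, KX F (ancestors v) nu D -> D u -> VT u -> tle adj root v u.

Lemma end_above_root : end_above root.
Proof. split; [exact (rt_root VT adj root Ht)|]. intros D u _ _ Hu. exact (root_tle u Hu). Qed.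

Lemma toward_end_exists v : end_above v -> exists c, toward_end v c.
Proof.
  intros [Hv Habove]. destruct (Hcl (ancestors v) (ancestors_finite v Hv)) as [D [HD [u [Du Hu]]]].
  assert (Hne : v <> u) by (intros <-; exact (KX_avoids _ _ _ _ HD Du (tle_refl v Hv))).
  destruct (child_toward v u (Habove D u HD Du Hu) Hne) as [c [Hc [Hvc Hcu]]].
  exists c. split; [exact Hc|split; [exact Hvc|]]. exists D, u. auto.
Qed.

(* A common lower bound in K(ancestors v, nu) of the witness above [c] and of [u'] lies strictly
   above [v], hence above [c]. *)
Lemma toward_end_above v c : end_above v -> toward_end v c -> end_above c.
Proof.
  intros [Hv Habove] [Hc [Hvc [D [u [HD [Du [Hu Hcu]]]]]]]. split; [exact Hc|].
  intros D' u' HD' Du' Hu'.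
  assert (Hvc' : tle adj root v c) by exact (child_tle v c Hv Hc Hvc).
  assert (HD'D : subset D' D).
  { apply (KX_antimono HF nu (ancestors v) (ancestors c)); auto using ancestors_finite.
    intros x Hx. exact (tle_trans x v c Hx Hvc'). }
  destruct (connected_common_lower_bound D u u' (component_connected _ _ (KX_component _ _ _ HD))
              Du (HD'D u' Du') Hu Hu') as [w [Dw [Hwu Hwu']]].
  assert (Hw : ~ tle adj root w v) by exact (KX_avoids _ _ _ _ HD Dw).
  assert (Hvw : tle adj root v w).
  { destruct (tle_total v w u' (Habove D u' HD (HD'D u' Du') Hu') Hwu') as [H|H];
      [exact H|contradiction]. }
  assert (Hwv : w <> v) by (intros ->; exact (Hw (tle_refl v Hv))).
  exact (tle_trans c w u' (child_below v c u w Hvc Hcu Hwu Hvw Hwv) Hwu').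
Qed.

Lemma end_ray_step k : end_above (end_ray k) /\ toward_end (end_ray k) (end_ray (S k)).
Proof.
  assert (Hnext : forall k, end_above (end_ray k) -> toward_end (end_ray k) (end_ray (S k)))
    by (intros k' H; change (end_ray (S k')) with (next_toward_end (end_ray k'));
        unfold next_toward_end; apply epsilon_spec, toward_end_exists, H).
  induction k as [|k [IH _]].
  - split; [exact end_above_root|apply Hnext, end_above_root].
  - assert (H : end_above (end_ray (S k))) by exact (toward_end_above _ _ IH (Hnext k IH)).
    split; [exact H|exact (Hnext (S k) H)].
Qed.

Lemma end_ray_depth k : depth (end_ray k) = S k.
Proof.
  induction k as [|k IH].
  - simpl. unfold depth. rewrite root_path_root. reflexivity.
  - destruct (end_ray_step k) as [_ [_ [Hc _]]]. rewrite (child_depth _ _ Hc), IH. reflexivity.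
Qed.

Lemma end_ray_rooted : rooted_ray end_ray.
Proof.
  split; [split|reflexivity].
  - intros n m E. pose proof (end_ray_depth n) as H. rewrite E, end_ray_depth in H. lia.
  - intros n. destruct (end_ray_step n) as [[Hv _] [Hc [Hch _]]]. exact (child_adj _ _ Hv Hc Hch).
Qed.

(* Take a tree vertex [u] of K(X ∪ ancestors (end_ray k), nu), at the depth of [end_ray h], and
   [u'] in the smaller component that also avoids the ancestors of [end_ray h]: a common lower
   bound of [u] and [u'] is [end_ray h] itself or below it, and lies beyond [end_ray k]. *)
Lemma end_ray_visits X D k : finite_set X -> KX F X nu D -> exists j, k < j /\ D (end_ray j).
Proof.
  intros HX HD. pose proof end_ray_rooted as HR.
  assert (HVR : forall i, VT (end_ray i)) by exact (ray_VT _ (proj1 HR)).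
  set (Z := fun x => X x \/ ancestors (end_ray k) x).
  assert (HZ : finite_set Z) by exact (finite_union _ _ HX (ancestors_finite _ (HVR k))).
  destruct (Hcl Z HZ) as [DZ [HDZ [u [DZu Hu]]]].
  set (h := pred (depth u)).
  assert (Hdu : depth (end_ray h) = depth u)
    by (rewrite end_ray_depth; pose proof (depth_pos u Hu); unfold h; lia).
  set (Z' := fun x => Z x \/ ancestors (end_ray h) x).
  assert (HZ' : finite_set Z') by exact (finite_union _ _ HZ (ancestors_finite _ (HVR h))).
  destruct (Hcl Z' HZ') as [DZ' [HDZ' [u' [DZ'u' Hu']]]].
  assert (HDZ'DZ : subset DZ' DZ)
    by (apply (KX_antimono HF nu Z Z'); auto; intros x Hx; left; exact Hx).
  assert (Hhu' : tle adj root (end_ray h) u').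
  { destruct (KX_exists HF nu _ (ancestors_finite _ (HVR h))) as [Dh HDh].
    apply (proj2 (proj1 (end_ray_step h)) Dh u' HDh); [|exact Hu'].
    exact (KX_antimono HF nu _ Z' DZ' Dh (ancestors_finite _ (HVR h)) HZ'
             (fun x Hx => or_intror Hx) HDZ' HDh u' DZ'u'). }
  destruct (connected_common_lower_bound DZ u u' (component_connected _ _ (KX_component _ _ _ HDZ))
              DZu (HDZ'DZ u' DZ'u') Hu Hu') as [w [DZw [Hwu Hwu']]].
  assert (Hon : exists i, w = end_ray i).
  { destruct (tle_total (end_ray h) w u' Hhu' Hwu') as [Hhw|Hwh].
    - exists h. symmetry. apply (tle_depth_eq _ _ Hhw).
      pose proof (tle_depth _ _ Hhw). pose proof (tle_depth _ _ Hwu). lia.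
    - apply (tle_rooted_ray _ HR) in Hwh. destruct Hwh as [i [_ E]]. exists i. exact E. }
  destruct Hon as [i ->]. exists i. split.
  - destruct (le_lt_dec i k) as [Hik|Hki]; [exfalso|exact Hki].
    apply (KX_avoids _ _ _ _ HDZ DZw). right. apply (tle_rooted_ray _ HR). exists i. auto.
  - apply (KX_antimono HF nu X Z DZ D); auto. intros x Hx. left. exact Hx.
Qed.

Lemma eta_end_of_end_ray : eta (end_of_ray end_ray (proj1 end_ray_rooted)) = nu.
Proof.
  set (om := end_of_ray end_ray (proj1 end_ray_rooted)).
  assert (Hray : ray_of_end om = end_ray)
    by exact (eq_sym (ray_of_end_unique om _ (end_of_ray_mem _ _) (proj2 end_ray_rooted))).
  apply (cend_eq HF). intros X HX. pose proof (eta_converges om) as Hc. rewrite Hray in Hc.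
  destruct (converges_eventually _ _ (proj1 (proj1 end_ray_rooted)) Hc X HX) as [D1 [HD1 [n1 Hn1]]].
  destruct (KX_exists HF nu X HX) as [D2 HD2].
  destruct (end_ray_visits X D2 n1 HX HD2) as [j [Hj Dj]].
  exists D1, D2. split; [exact HD1|split; [exact HD2|]].
  exists (end_ray j). split; [apply Hn1; lia|exact Dj].
Qed.

End Surjective.

Lemma eta_surjective nu : in_closure F VT nu -> exists om, eta om = nu.
Proof. intros Hcl. eexists. exact (eta_end_of_end_ray nu Hcl). Qed.

End NormalTree.
End Tree.

Theorem theorem5p2 (V : Type) (F : (V -> Prop) -> Prop) (VT : V -> Prop)
  (adj : V -> V -> Prop) (root : V) :
  connectoid F -> normal_tree F VT adj root ->
  exists eta : tend adj -> cend F,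
    (forall (om : tend adj) (R : nat -> V), proj1_sig om R -> R 0 = root ->
       converges F (ray_set R) (eta om) /\
       (forall nu : cend F, converges F (ray_set R) nu -> nu = eta om)) /\
    (forall om, in_closure F VT (eta om)) /\
    (forall om1 om2, eta om1 = eta om2 -> om1 = om2) /\
    (forall nu : cend F, in_closure F VT nu -> exists om, eta om = nu).
Proof.
  intros HF [[Ht [Hbelow _]] Hnecklace].
  exists (eta Ht HF Hnecklace). split; [|split; [|split]].
  - intros om R HR HR0. rewrite (ray_of_end_unique Ht om R HR HR0).
    split; [exact (eta_converges Ht HF Hnecklace om)|].
    intros nu Hnu. exact (converges_unique HF _ _ _ Hnu (eta_converges Ht HF Hnecklace om)).
  - exact (eta_in_closure Ht HF Hnecklace).
  - exact (eta_injective Ht HF Hbelow Hnecklace).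
  - exact (eta_surjective Ht HF Hbelow Hnecklace).
Qed.
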